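(* Let $w$ be a non-binary word. Then every element of $\mathtt{BR}(w)$ is rich if and only if either $w = a_1a_2\cdots a_k$ where $a_1,\dots,a_k\in\Sigma$ are pairwise distinct letters, or $w = c^{|w|}$ for a single letter $c\in\Sigma$.
   Context: $\Sigma$ is an alphabet; $\Sigma^*$ is the set of finite words over $\Sigma$. For a word $w=w_1\cdots w_n$ ($w_i\in\Sigma$), $|w|=n$ and $w^R=w_n\cdots w_1$; $w$ is a palindrome if $w=w^R$. A factor of $w$ is a word $u$ with $w=puq$ for some words $p,q$. A word $w$ is rich if the number of distinct nonempty palindromic factors of $w$ equals $|w|$ (the maximum possible). $\mathrm{Alph}(w)$ denotes the set of letters occurring in $w$. The block reversal of a nonempty word $w$ is $\mathtt{BR}(w)=\{B_tB_{t-1}\cdots B_1 : w=B_1B_2\cdots B_t,\ t\ge 1,\ B_i\in\Sigma^+\}$. A non-binary word is a nonempty word $w$ with $|\mathrm{Alph}(w)|\neq 2$. *)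

From mathcomp Require Import all_boot.
Set Implicit Arguments. Unset Strict Implicit. Unset Printing Implicit Defensive.

Definition factors (T : eqType) (w : seq T) : seq (seq T) :=
  [seq take j (drop i w) | i <- iota 0 (size w).+1, j <- iota 0 (size w - i).+1].

Definition is_factor (T : eqType) (u w : seq T) : bool := infix u w.

Definition palindrome (T : eqType) (w : seq T) : bool := rev w == w.

Definition pal_factors (T : eqType) (w : seq T) : seq (seq T) :=
  undup [seq u <- factors w | (u != [::]) && palindrome u].

Definition rich (T : eqType) (w : seq T) : Prop := size (pal_factors w) = size w.

Definition in_BR (T : eqType) (w v : seq T) : Prop :=
  exists bs : seq (seq T),
    [/\ bs != [::], all (fun b => b != [::]) bs, flatten bs = w & v = flatten (rev bs)].

Definition nalph (T : eqType) (w : seq T) : nat := size (undup w).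

(* Appending a letter to a word creates at most one new palindromic factor,
   so a word has at most as many palindromic factors as letters, and
   every factor of a rich word is rich.  Block reversals only permute the
   letters of w, which settles the easy direction: a word with pairwise
   distinct letters has only its letters as palindromes, and c^n has exactly
   c, ..., c^n.  Conversely, if w has at least three letters and a repeated
   one, a shortest such factor x z y of w has a block reversal containing a
   factor a m a with a not in m and m not a palindrome; such a word is not
   rich, because its last letter creates no new palindrome. *)

From mathcomp Require Import all_boot zify.
Set Implicit Arguments. Unset Strict Implicit. Unset Printing Implicit Defensive.

Section PalindromicFactors.
Variable T : eqType.
Implicit Types (a c x : T) (t u w m p s : seq T).

Local Notation npal w := (size (pal_factors w)).

Lemma mem_factors t w : (t \in factors w) = infix t w.
Proof.
apply/allpairsPdep/idP => [[i [j [_ _ ->]]]|/infixP[p [s ->]]].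
  exact: infix_trans (infix_take _ _) (infix_drop _ _).
exists (size p), (size t); rewrite !mem_iota !size_cat drop_size_cat //.
by rewrite take_size_cat //; split => //; lia.
Qed.

Lemma mem_pal_factors t w :
  (t \in pal_factors w) = [&& t != [::], palindrome t & infix t w].
Proof. by rewrite mem_undup mem_filter mem_factors andbA. Qed.

Lemma size_pal_factors_rev w : npal (rev w) = npal w.
Proof.
apply/perm_size/uniq_perm; rewrite ?undup_uniq // => t.
rewrite !mem_pal_factors; case: (boolP (palindrome t)); rewrite ?andbF //.
by move/eqP=> pal_t; rewrite -[infix t w]infix_rev pal_t.
Qed.

Lemma suffix_le_suffix t1 t2 w :
  suffix t1 w -> suffix t2 w -> size t1 <= size t2 -> suffix t1 t2.
Proof.
move=> suf1 suf2 le12; have le2w := size_suffix suf2.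
move: suf1 suf2; rewrite !suffixE => /eqP e1 /eqP e2; apply/eqP.
by rewrite -{2}e2 drop_drop -{2}e1; congr drop; lia.
Qed.

(* The shorter palindromic suffix is also a prefix of the longer one. *)
Lemma pal_suffix_infix t1 t2 u x : palindrome t1 -> palindrome t2 ->
  suffix t1 (rcons u x) -> suffix t2 (rcons u x) -> size t1 < size t2 ->
  infix t1 u.
Proof.
move=> /eqP pal1 /eqP pal2 suf1 suf2 lt12.
have /prefixP[r def_t2] : prefix t1 t2.
  by rewrite -pal1 -pal2 prefix_rev (suffix_le_suffix suf1 suf2 (ltnW lt12)).
case/lastP: r def_t2 => [|r z] def_t2; first by rewrite def_t2 cats0 ltnn in lt12.
move/suffixP: suf2 => [q]; rewrite def_t2 -!rcons_cat => /rcons_inj[-> _].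
exact: infix_infix.
Qed.

Lemma pal_factors_rcons_new t u x : t \in pal_factors (rcons u x) ->
  t \notin pal_factors u -> [/\ palindrome t, suffix t (rcons u x) & ~~ infix t u].
Proof.
rewrite !mem_pal_factors => /and3P[-> pal_t]; rewrite pal_t infix_rconsl /=.
by case/orP=> [suf_t|->].
Qed.

(* The only possible new palindrome is the longest palindromic suffix. *)
Lemma size_pal_factors_rcons u x : npal (rcons u x) <= (npal u).+1.
Proof.
have [old|/allPn[t new_t t_notin]] :=
  boolP (all (mem (pal_factors u)) (pal_factors (rcons u x))).
  by apply/leqW/uniq_leq_size; [exact: undup_uniq | move=> t /(allP old)].
have [pal_t suf_t not_t] := pal_factors_rcons_new new_t t_notin.
apply: (@uniq_leq_size _ _ (t :: pal_factors u)); first exact: undup_uniq.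
move=> t' new_t'; rewrite in_cons.
have [_|t'_notin] := boolP (t' \in pal_factors u); first by rewrite orbT.
have [pal_t' suf_t' not_t'] := pal_factors_rcons_new new_t' t'_notin.
case: (ltngtP (size t') (size t)) => [lt|lt|eq_size].
- by rewrite (pal_suffix_infix pal_t' pal_t suf_t' suf_t lt) in not_t'.
- by rewrite (pal_suffix_infix pal_t pal_t' suf_t suf_t' lt) in not_t.
- have := suffix_le_suffix suf_t' suf_t (eq_leq eq_size).
  by rewrite suffixE eq_size subnn drop0 => /eqP->; rewrite eqxx.
Qed.

Lemma size_pal_factors_cons x u : npal (x :: u) <= (npal u).+1.
Proof.
rewrite -size_pal_factors_rev rev_cons -(size_pal_factors_rev u).
exact: size_pal_factors_rcons.
Qed.

Lemma size_pal_factors_cat p u s : npal (p ++ u ++ s) <= npal u + size p + size s.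
Proof.
elim: p => [|x p IHp] /=; last by apply: leq_trans (size_pal_factors_cons _ _) _; lia.
elim/last_ind: s => [|s x IHs]; first by rewrite cats0 /= !addn0.
by rewrite -rcons_cat size_rcons; apply: leq_trans (size_pal_factors_rcons _ _) _; lia.
Qed.

Lemma size_pal_factors_le w : npal w <= size w.
Proof. by have := size_pal_factors_cat w [::] [::]; rewrite /= !cats0 addn0. Qed.

Lemma rich_infix u w : infix u w -> rich w -> rich u.
Proof.
case/infixP=> p [s ->]; rewrite /rich !size_cat => rich_w.
have := size_pal_factors_cat p u s; have := size_pal_factors_le u; lia.
Qed.

Lemma size_pal_factors_rcons_stable u x :
  (forall t, t != [::] -> palindrome t -> suffix t (rcons u x) -> infix t u) ->
  npal (rcons u x) <= npal u.
Proof.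
move=> old_suffixes; apply/uniq_leq_size; first exact: undup_uniq.
move=> t; rewrite !mem_pal_factors => /and3P[t_nil pal_t]; rewrite t_nil pal_t.
by rewrite infix_rconsl => /orP[/(old_suffixes _ t_nil pal_t)|].
Qed.

(* The last [a] of [a m a] creates no new palindrome: a palindromic suffix
   other than [a] would start with an [a] inside [m] or be all of [a m a]. *)
Lemma not_rich_border a m : a \notin m -> ~~ palindrome m ->
  ~ rich (a :: m ++ [:: a]).
Proof.
move=> a_notin_m not_pal_m; rewrite /rich cats1 -rcons_cons size_rcons => rich_ama.
suff : npal (rcons (a :: m) a) <= size (a :: m) by rewrite rich_ama ltnn.
apply: leq_trans (size_pal_factors_le _); apply: size_pal_factors_rcons_stable.
move=> t t_nil pal_t /suffixP[[|b q] /= def_t].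
  move: pal_t; rewrite -def_t /palindrome -rcons_cons rev_rcons rev_cons -rcons_cons.
  by move=> /eqP/rcons_inj[pal_m]; rewrite /palindrome pal_m eqxx in not_pal_m.
case: def_t => _; case: t t_nil pal_t => [|c t] // _ pal_ct.
case/lastP: t pal_ct => [|t d] pal_ct.
  by rewrite cats1 => /rcons_inj[_ ->]; rewrite eqxx prefix0s.
move: pal_ct; rewrite /palindrome rev_cons rev_rcons -rcons_cons.
move=> /eqP/rcons_inj[dc _ _].
rewrite -rcons_cat => /rcons_inj[def_m ad].
by rewrite def_m ad dc mem_cat mem_head orbT in a_notin_m.
Qed.

Lemma uniq_not_palindrome m : uniq m -> 1 < size m -> ~~ palindrome m.
Proof.
case: m => [|a m] //; case/lastP: m => [|m b] // uniq_amb _.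
rewrite /palindrome rev_cons rev_rcons -rcons_cons; apply/eqP => /rcons_inj[ba _].
by move: uniq_amb; rewrite ba /= mem_rcons mem_head.
Qed.

Lemma rich_uniq w : uniq w -> rich w.
Proof.
move=> uniq_w; rewrite /rich -(size_map (fun a => [:: a])).
apply/perm_size/uniq_perm; rewrite ?undup_uniq ?map_inj_uniq //; first by move=> a b [].
move=> t; rewrite mem_pal_factors.
apply/and3P/mapP => [[t_nil pal_t infix_t]|[a a_in ->]].
  case: t t_nil pal_t infix_t => [|a [|b t]] // _ pal_t infix_t.
    by exists a; rewrite -?infix1s.
  by rewrite (negbTE (uniq_not_palindrome (infix_uniq infix_t uniq_w) _)) in pal_t.
by rewrite /palindrome infix1s.
Qed.

Lemma rich_nseq n c : rich (nseq n c).
Proof.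
rewrite /rich size_nseq -[n in RHS](size_iota 1) -(size_map (nseq^~ c)).
apply/perm_size/uniq_perm; rewrite ?undup_uniq //.
  by rewrite map_inj_uniq ?iota_uniq // => i j /(congr1 size); rewrite !size_nseq.
move=> t; rewrite mem_pal_factors; apply/and3P/mapP => [[t_nil _ infix_t]|[k]].
  have /all_pred1P def_t : all (pred1 c) t.
    by apply/allP => a /(mem_infix infix_t); rewrite mem_nseq => /andP[].
  exists (size t) => //; rewrite mem_iota lt0n size_eq0 t_nil add1n ltnS.
  by rewrite -(size_nseq n c) size_infix.
rewrite mem_iota add1n ltnS => /andP[k_gt0 k_le_n] ->.
rewrite /palindrome rev_nseq -size_eq0 size_nseq -lt0n k_gt0 eqxx.
by rewrite -(subnKC k_le_n) nseqD prefix_infix.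
Qed.

End PalindromicFactors.

Section BlockReversal.
Variable T : eqType.
Implicit Types (u v p s : seq T) (bs : seq (seq T)).

Lemma flatten_filter_nil bs : flatten [seq b <- bs | b != [::]] = flatten bs.
Proof. by elim: bs => [|[|a b] bs IHbs] //=; rewrite IHbs. Qed.

Lemma in_BR_flatten bs : flatten bs != [::] -> in_BR (flatten bs) (flatten (rev bs)).
Proof.
move=> flatten_nil; exists [seq b <- bs | b != [::]]; split.
- by apply: contra_neq flatten_nil => /(congr1 flatten); rewrite flatten_filter_nil.
- exact: filter_all.
- exact: flatten_filter_nil.
- by rewrite -filter_rev flatten_filter_nil.
Qed.

Lemma in_BR_neq_nil u v : in_BR u v -> u != [::].
Proof.
by case=> bs [bs_nil all_nil <- _]; case: bs bs_nil all_nil => [|[|a b] bs].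
Qed.

Lemma in_BR_cat u v p s : in_BR u v -> in_BR (p ++ u ++ s) (s ++ v ++ p).
Proof.
move=> uv; have := in_BR_neq_nil uv; case: uv => bs [_ _ <- ->] flatten_nil.
have := @in_BR_flatten (p :: bs ++ [:: s]).
rewrite rev_cons rev_cat /= flatten_rcons !flatten_cat /= !cats0; apply.
by apply: contra flatten_nil; rewrite -!size_eq0 !size_cat; lia.
Qed.

Lemma in_BR_perm u v : in_BR u v -> perm_eq v u.
Proof. by case=> bs [_ _ <- ->]; apply/perm_flatten; rewrite perm_rev. Qed.

End BlockReversal.

Section Alphabet.
Variable T : eqType.
Implicit Types (x y c : T) (s z : seq T).

Lemma nalph_cons x s : nalph (x :: s) = nalph s + (x \notin s).
Proof. by rewrite /nalph /=; case: (x \in s); rewrite ?addn0 ?addn1. Qed.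

Lemma nalph_rev s : nalph (rev s) = nalph s.
Proof. exact/perm_size/perm_undup/mem_rev. Qed.

Lemma nalph_rcons s y : nalph (rcons s y) = nalph s + (y \notin s).
Proof. by rewrite -nalph_rev rev_rcons nalph_cons nalph_rev mem_rev. Qed.

Lemma nalph_uniq s : uniq s -> nalph s = size s.
Proof. by move=> uniq_s; rewrite /nalph undup_id. Qed.

Lemma nalph_gt0 s : s != [::] -> 0 < nalph s.
Proof. by apply: contraNT; rewrite lt0n negbK size_eq0 => /eqP/undup_nil ->. Qed.

Lemma nalph_eq1 s : nalph s = 1 -> exists c, s = nseq (size s) c.
Proof.
rewrite /nalph; case def_s: (undup s) => [|c []] // _; exists c.
by apply/all_pred1P/allP => a; rewrite -mem_undup def_s inE.
Qed.

(* [x] and [y] must both be letters not occurring elsewhere in [x z y]. *)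
Lemma nalph_trim_nseq x z y : 2 < nalph (x :: rcons z y) ->
  nalph (x :: z) <= 2 -> nalph (rcons z y) <= 2 -> ~~ uniq (x :: z) ->
  exists c k, [/\ z = nseq k.+2 c, x != c, y != c & x != y].
Proof.
move=> xzy_gt2 xz_le2 zy_le2 not_uniq_xz.
have x_notin : x \notin rcons z y.
  by apply: contraTN xzy_gt2 => x_in; rewrite nalph_cons x_in addn0 -leqNgt.
have y_notin : y \notin x :: z.
  by apply: contraTN xzy_gt2 => y_in; rewrite -rcons_cons nalph_rcons y_in addn0 -leqNgt.
move: x_notin y_notin; rewrite mem_rcons !in_cons !negb_or eq_sym.
move=> /andP[y_neq_x x_notin_z] /andP[_ y_notin_z].
have /nalph_eq1[c def_z] : nalph z = 1.
  move: xzy_gt2 xz_le2; rewrite -rcons_cons nalph_rcons nalph_cons in_cons negb_or.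
  lia.
move: x_notin_z y_notin_z not_uniq_xz; rewrite /= def_z.
case: (size z) => [|[|k]] x_notin y_notin; rewrite ?x_notin //= => _; exists c, k.
move: x_notin y_notin; rewrite !in_cons !negb_or eq_sym y_neq_x.
by move=> /andP[-> _] /andP[-> _].
Qed.

End Alphabet.

Section RichBlockReversals.
Variable T : eqType.
Implicit Types (x y c : T) (u v w z m s : seq T).

Definition all_BR_rich w := forall v, in_BR w v -> rich v.

Lemma all_BR_rich_infix u w : infix u w -> all_BR_rich w -> all_BR_rich u.
Proof.
case/infixP=> p [s ->] rich_w v uv.
exact: rich_infix (infix_infix s v p) (rich_w _ (in_BR_cat p s uv)).
Qed.

Lemma not_rich_border_uniq x m s : uniq (m ++ x :: s) -> 2 < size (m ++ x :: s) ->
  ~ rich (x :: (s ++ m) ++ [:: x]).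
Proof.
rewrite uniq_catC /= size_cat /= => /andP[x_notin uniq_sm] size_msx.
apply: not_rich_border x_notin (uniq_not_palindrome uniq_sm _).
by rewrite size_cat; lia.
Qed.

Lemma not_all_BR_rich_cons x u : uniq u -> x \in u -> 2 < size u ->
  ~ all_BR_rich (x :: u).
Proof.
move=> uniq_u x_in; case/splitPr: x_in uniq_u => m s uniq_u size_u rich_w.
apply: not_rich_border_uniq uniq_u size_u _.
apply: rich_w; have := @in_BR_flatten _ [:: [:: x]; m; x :: s] isT.
by rewrite /= !cats0 -catA.
Qed.

Lemma not_all_BR_rich_rcons y u : uniq u -> y \in u -> 2 < size u ->
  ~ all_BR_rich (rcons u y).
Proof.
move=> uniq_u y_in; case/splitPr: y_in uniq_u => m s uniq_u size_u rich_w.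
apply: not_rich_border_uniq uniq_u size_u _.
apply: rich_w; have := @in_BR_flatten _ [:: m ++ [:: y]; s; [:: y]].
by rewrite /= !cats0 -!catA cats1 rcons_cat; apply; rewrite -size_eq0 !size_cat addnS.
Qed.

Lemma not_all_BR_rich_nseq x c y k : x != c -> y != c -> x != y ->
  ~ all_BR_rich (x :: rcons (nseq k.+2 c) y).
Proof.
move=> xc yc xy rich_w.
have [] : ~ rich (c :: [:: y; x] ++ [:: c]).
  apply: not_rich_border; first by rewrite !inE negb_or ![c == _]eq_sym xc yc.
  by apply: contra xy => /eqP[->].
apply: rich_infix (infix_infix (nseq k c) _ [::]) (rich_w _ _).
have nseqC l : nseq k c ++ c :: l = c :: nseq k c ++ l by elim: (k) => //= k' ->.
have := @in_BR_flatten _ [:: [:: x; c]; c :: rcons (nseq k c) y] isT.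
by rewrite /= cats0 nseqC -cats1 -catA.
Qed.

(* By induction, the factors [x z] and [z y] of [w = x z y] are uniq or use
   at most two letters; each way for [w] not to be uniq then contradicts one
   of the three lemmas above. *)
Lemma all_BR_rich_uniq w : all_BR_rich w -> 2 < nalph w -> uniq w.
Proof.
have [n] := ubnP (size w); elim: n w => // n IHn [|x u] //; case/lastP: u => [|z y] //.
rewrite ltnS => size_w rich_w nalph_w.
have small_factor v : infix v (x :: rcons z y) -> size v < size (x :: rcons z y) ->
    ~~ uniq v -> nalph v <= 2.
  move=> infix_v size_v; rewrite leqNgt; apply: contra.
  exact: IHn (leq_trans size_v size_w) (all_BR_rich_infix infix_v rich_w).
have [uniq_zy|not_uniq_zy] := boolP (uniq (rcons z y)).
  have [x_in|x_notin] := boolP (x \in rcons z y).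
    case: (not_all_BR_rich_cons uniq_zy x_in _ rich_w).
    by move: nalph_w; rewrite nalph_cons x_in addn0 nalph_uniq.
  by rewrite /= x_notin.
have [uniq_xz|not_uniq_xz] := boolP (uniq (x :: z)).
  have [y_in|y_notin] := boolP (y \in x :: z).
    case: (not_all_BR_rich_rcons uniq_xz y_in _ rich_w).
    by move: nalph_w; rewrite -rcons_cons nalph_rcons y_in addn0 nalph_uniq.
  by rewrite -rcons_cons rcons_uniq y_notin.
have xz_le2 : nalph (x :: z) <= 2.
  apply: (small_factor _ _ _ not_uniq_xz); last by rewrite /= size_rcons.
  by rewrite -rcons_cons infix_rcons.
have zy_le2 : nalph (rcons z y) <= 2.
  by apply: (small_factor _ _ _ not_uniq_zy); rewrite ?infix_cons.
have [c [k [def_z xc yc xy]]] := nalph_trim_nseq nalph_w xz_le2 zy_le2 not_uniq_xz.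
by rewrite def_z in rich_w; case: (not_all_BR_rich_nseq xc yc xy rich_w).
Qed.

End RichBlockReversals.

Theorem mainTheorem1 (Sigma : eqType) (w : seq Sigma) :
  w != [::] -> nalph w != 2 ->
  ((forall v, in_BR w v -> rich v) <->
   (uniq w \/ exists c : Sigma, w = nseq (size w) c)).
Proof.
move=> w_nil nalph_w_neq2; split=> [rich_w|[uniq_w|[c def_w]] v /in_BR_perm perm_vw].
- have [uniq_w|not_uniq_w] := boolP (uniq w); [by left | right].
  have [/nalph_eq1 //|nalph_w_neq1] := eqVneq (nalph w) 1.
  have nalph_w : 2 < nalph w by have := nalph_gt0 w_nil; lia.
  by rewrite (all_BR_rich_uniq rich_w nalph_w) in not_uniq_w.
- by apply: rich_uniq; rewrite (perm_uniq perm_vw).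
- have /all_pred1P -> : all (pred1 c) v.
    by rewrite (perm_all _ perm_vw) def_w all_pred1_nseq.
  exact: rich_nseq.
Qed.
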